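(* Let $L:\mathbb{R}^n\times\mathbb{R}^n\to\mathbb{R}$ be smooth (time-independent). For $a=(q_a,t_a)$, $b=(q_b,t_b)\in\mathbb{R}^n\times\mathbb{R}$ with $t_b\neq t_a$ put $$v(a,b)=\frac{q_b-q_a}{t_b-t_a},\qquad e(a,b)=L(q_a,v(a,b))-\langle D_2L(q_a,v(a,b)),v(a,b)\rangle .$$ Consider sequences $x_k=(q_k,t_k)$ (with $t_{k+1}\ne t_k$), and write $v_k=v(x_k,x_{k+1})$, $e_{k+1}=e(x_k,x_{k+1})$. The symplectic–energy Störmer-type scheme is $$e_{k+1}=e_k,\qquad (t_{k+1}-t_k)\,D_1L(q_k,v_k)-\big(D_2L(q_k,v_k)-D_2L(q_{k-1},v_{k-1})\big)=0 .$$ Then: (i) along any solution the energy $E_k:=\langle D_2L(q_{k-1},v_{k-1}),v_{k-1}\rangle-L(q_{k-1},v_{k-1})=-e_k$ is constant in $k$; (ii) if $U\subset(\mathbb{R}^n\times\mathbb{R})^2$ is open and $G:U\to(\mathbb{R}^n\times\mathbb{R})^2$ is smooth with $G(x_{k-1},x_k)=(x_k,x_{k+1})$ satisfying the scheme for every $(x_{k-1},x_k)\in U$, then, defining on $U$ the one-form $\theta^L=e(a,b)\,dt_b+\sum_i D_2L(q_a,v(a,b))_i\,dq_b^i$ and $\omega^L=d\theta^L$, we have $G^*\omega^L=\omega^L$ (the Lagrangian two-form is preserved).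
   Context: This scheme is the discrete Euler–Lagrange system obtained from the generalized discrete Hamilton's principle with time as a generalized coordinate: parametric discrete Lagrangian $\bar L_d=\Delta_\tau t_k\,L(q_k,\Delta_\tau q_k/\Delta_\tau t_k)$ with forward differences $\Delta_\tau q_k=(q_{k+1}-q_k)/\tau$, $\Delta_\tau t_k=(t_{k+1}-t_k)/\tau$, and $e_{k+1}=\partial\bar L_d/\partial(\Delta_\tau t_k)$. *)

From HB Require Import structures.
From mathcomp Require Import all_boot all_order all_algebra.
From mathcomp Require Import all_classical all_reals.
From mathcomp Require Import topology normedtype derive.
Set Implicit Arguments. Unset Strict Implicit. Unset Printing Implicit Defensive.
Import Order.TTheory GRing.Theory Num.Theory.
Import numFieldNormedType.Exports.
Local Open Scope classical_set_scope.
Local Open Scope ring_scope.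

Section Defs.
Variable R : realType.

Fixpoint iderive (V W : normedModType R) (vs : seq V) (f : V -> W) : V -> W :=
  match vs with
  | [::] => f
  | v :: vs' => fun x => derive (iderive vs' f) x v
  end.

Definition smooth_on (V W : normedModType R) (U : set V) (f : V -> W) :=
  forall (vs : seq V) (x : V), U x -> differentiable (iderive vs f) x.

Definition smooth (V W : normedModType R) (f : V -> W) := smooth_on setT f.

Variable n : nat.
Definition pt := ('rV[R]_n * R)%type.
Definition st := (pt * pt)%type.

Variable L : 'rV[R]_n * 'rV[R]_n -> R.

Definition D1L (q v w : 'rV[R]_n) : R := derive L (q, v) (w, 0).
Definition D2L (q v w : 'rV[R]_n) : R := derive L (q, v) (0, w).

Definition vel (a b : pt) : 'rV[R]_n := (b.2 - a.2)^-1 *: (b.1 - a.1).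

Definition ener (a b : pt) : R :=
  L (a.1, vel a b) - D2L a.1 (vel a b) (vel a b).

(* The discrete Euler-Lagrange
   equation is an equality of covectors, i.e. it holds on every w in R^n. *)
Definition scheme (xm x xp : pt) : Prop :=
  ener x xp = ener xm x /\
  forall w : 'rV[R]_n,
    (xp.2 - x.2) * D1L x.1 (vel x xp) w
    - (D2L x.1 (vel x xp) w - D2L xm.1 (vel xm x) w) = 0.

Definition energy (xm x : pt) : R :=
  D2L xm.1 (vel xm x) (vel xm x) - L (xm.1, vel xm x).

(* theta^L at p = (a,b), applied to the tangent vector d = (da, db),
   db = (dq_b, dt_b):  e(a,b) dt_b + sum_i D_2L(q_a,v(a,b))_i dq_b^i *)
Definition thetaL (p d : st) : R :=
  ener p.1 p.2 * d.2.2 + D2L p.1.1 (vel p.1 p.2) d.2.1.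

(* omega^L = d theta^L, evaluated on (constant) tangent vectors u, w *)
Definition omegaL (p u w : st) : R :=
  derive (fun x => thetaL x w) p u - derive (fun x => thetaL x u) p w.

Definition pullback_omegaL (G : st -> st) (p u w : st) : R :=
  omegaL (G p) (derive G p u) (derive G p w).

End Defs.

(* The discrete action Ld (a, b) = (t_b - t_a) L (q_a, v (a, b)), i.e. tau times the
   parametric discrete Lagrangian, governs the scheme.  Its directional derivative
   dLd beta = D_beta Ld is linear in beta = (beta_a, beta_b), theta^L is dLd restricted
   to beta_a = 0, and the scheme says exactly dLd (0, c) x + dLd (c, 0) (G x) = 0 for
   every constant c.  Differentiating this identity along u, with (DG u).1 = u.2
   because (G x).1 = x.2, expresses G^* omega^L through omega^L and the antisymmetric
   part D_alpha dLd beta - D_beta dLd alpha of the second derivative of Ld, which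
   vanishes by Schwarz's theorem.  Energy conservation is immediate: E_k = - e_k and
   the scheme contains e_{k+1} = e_k. *)

From HB Require Import structures.
From mathcomp Require Import all_boot all_order all_algebra.
From mathcomp Require Import all_classical all_reals.
From mathcomp Require Import topology normedtype derive landau realfun.
From mathcomp Require Import ring lra.
Import Order.TTheory GRing.Theory Num.Theory.
Import numFieldNormedType.Exports.
Local Open Scope classical_set_scope.
Local Open Scope ring_scope.

Section RealVariableDerivatives.
Context {R : realType}.
Implicit Types V W : normedModType R.

Lemma is_derive_lineP {V W} (f : V -> W) (x w : V) (t0 : R) (d : W) :
  is_derive t0 1 (fun t => f (x + t *: w)) d <-> is_derive (x + t0 *: w) w f d.
Proof.
have E : (fun h : R => h^-1 *: (((fun t => f (x + t *: w)) \o shift t0) (h *: 1)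
            - f (x + t0 *: w))) =
         (fun h : R => h^-1 *: ((f \o shift (x + t0 *: w)) (h *: w) - f (x + t0 *: w))).
  apply/funext => h /=; congr (_ *: (f _ - _)).
  by rewrite [h *: 1]mulr1 scalerDl addrCA addrA.
by split=> -[df <-]; apply: DeriveDef; rewrite /derivable /derive /= ?E -?E in df *.
Qed.

Lemma is_derive_line {V} (x w : V) (t0 : R) : is_derive t0 1 (fun t : R => x + t *: w) w.
Proof. by apply/(is_derive_lineP id); exact: is_derive_id. Qed.

Lemma is_deriveZl {W} (c : R -> R) (w : W) (t0 dc : R) :
  is_derive t0 1 c dc -> is_derive t0 1 (fun t => c t *: w) (dc *: w).
Proof.
move=> [/derivable1_diffP c1 <-].
split; first exact/diff_derivable/differentiableZl.
rewrite deriveE ?diffZl //=; last exact: differentiableZl.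
by rewrite deriveE.
Qed.

Lemma is_derive_pair {V W} (f : R -> V) (g : R -> W) (t0 : R) (df : V) (dg : W) :
  is_derive t0 1 f df -> is_derive t0 1 g dg ->
  is_derive t0 1 (fun t => (f t, g t)) (df, dg).
Proof.
move=> [/derivable1_diffP f1 <-] [/derivable1_diffP g1 <-].
have fg : differentiable (fun t => (f t, g t)) t0 by exact: differentiable_pair.
split; first exact: diff_derivable.
by rewrite deriveE // diff_pair //= -!deriveE.
Qed.

Lemma is_derive_comp {V W} (g : R -> V) (F : V -> W) (t0 : R) (dg : V) :
  is_derive t0 1 g dg -> differentiable F (g t0) ->
  is_derive t0 1 (fun t => F (g t)) ('d F (g t0) dg).
Proof.
move=> [/derivable1_diffP g1 <-] dF.
have Fg : differentiable (F \o g) t0 by exact: differentiable_comp.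
split; first exact: diff_derivable.
rewrite deriveE // diff_comp //=.
by rewrite deriveE.
Qed.

End RealVariableDerivatives.

Arguments is_deriveZl {R W c} w {t0 dc}.
Arguments is_derive_pair {R V W f g t0 df dg}.
Arguments is_derive_comp {R V W g} F {t0 dg}.

Lemma pair_split {A B : zmodType} (d : A * B) : d = (d.1, 0) + (0, d.2).
Proof. by case: d => d1 d2; rewrite -[RHS]/(d1 + 0, 0 + d2) addr0 add0r. Qed.

Section Differentials.
Context {R : realType}.
Implicit Types U V W : normedModType R.

Lemma derive_comp {U V W} (G : U -> V) (F : V -> W) (p u : U) :
  differentiable G p -> differentiable F (G p) ->
  'D_u (fun y => F (G y)) p = 'D_('D_u G p) F (G p).
Proof.
move=> dG dF; have FG : differentiable (F \o G) p by exact: differentiable_comp.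
by rewrite !deriveE // diff_comp.
Qed.

Lemma differentiable_fst {V W} (x : V * W) : differentiable fst x.
Proof. by apply: (linear_differentiable (f := fst)) => y; exact: cvg_fst. Qed.

Lemma differentiable_snd {V W} (x : V * W) : differentiable snd x.
Proof. by apply: (linear_differentiable (f := snd)) => y; exact: cvg_snd. Qed.

Lemma derive_fst {V W} (x v : V * W) : 'D_v fst x = v.1.
Proof.
rewrite deriveE ?(diff_lin (f := fst)) //; last exact: differentiable_fst.
by move=> y; exact: cvg_fst.
Qed.

Lemma derive_snd {V W} (x v : V * W) : 'D_v snd x = v.2.
Proof.
rewrite deriveE ?(diff_lin (f := snd)) //; last exact: differentiable_snd.
by move=> y; exact: cvg_snd.
Qed.

Lemma differentiable_coords {A B C D : normedModType R} (z : (A * B) * (C * D)) :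
  [/\ differentiable (fun y : (A * B) * (C * D) => y.1.1) z,
      differentiable (fun y : (A * B) * (C * D) => y.1.2) z,
      differentiable (fun y : (A * B) * (C * D) => y.2.1) z &
      differentiable (fun y : (A * B) * (C * D) => y.2.2) z].
Proof.
split; [ exact: differentiable_comp (differentiable_fst z) (differentiable_fst z.1)
       | exact: differentiable_comp (differentiable_fst z) (differentiable_snd z.1)
       | exact: differentiable_comp (differentiable_snd z) (differentiable_fst z.2)
       | exact: differentiable_comp (differentiable_snd z) (differentiable_snd z.2)].
Qed.

End Differentials.

Section Scaling.
Context {R : realType} {W : normedModType R}.

Lemma scaler_is_bilinear :
  bilinear_for (GRing.Scale.Law.clone _ _ *:%R _) (GRing.Scale.Law.clone _ _ *:%R _)
    (@GRing.scale R W : R^o -> W -> W).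
Proof.
split=> [u'|u] a x y /=; first by rewrite scalerDl scalerA.
by rewrite scalerDr !scalerA mulrC.
Qed.

HB.instance Definition _ := bilinear_isBilinear.Build R R^o W W _ _
  (@GRing.scale R W : R^o -> W -> W) scaler_is_bilinear.

Lemma differentiable_scale {V : normedModType R} (k : V -> R) (F : V -> W) x :
  differentiable k x -> differentiable F x -> differentiable (fun y => k y *: F y) x.
Proof.
move=> dk dF.
have -> : (fun y => k y *: F y) = (fun q : R * W => q.1 *: q.2) \o (fun y => (k y, F y)) by [].
apply: differentiable_comp; first exact: differentiable_pair.
apply: (differentiable_bilin (f := @GRing.scale R W : R^o -> W -> W)) => q.
exact: scale_continuous.
Qed.

End Scaling.

Section Schwarz.
Context {R : realType} {V : normedModType R}.
Implicit Types (f g : V -> R) (p u w : V).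

Lemma sq_coef_unique (D : R -> R) (A B : R) :
  (forall e, 0 < e -> \forall s \near 0^'+, `|D s - s ^+ 2 * A| <= e * s ^+ 2) ->
  (forall e, 0 < e -> \forall s \near 0^'+, `|D s - s ^+ 2 * B| <= e * s ^+ 2) ->
  A = B.
Proof.
move=> hA hB; apply/eqP; rewrite -subr_eq0 -normr_le0.
apply/ler_addgt0Pr => e e0; rewrite add0r.
have e2 : 0 < e / 2 by rewrite divr_gt0.
near (0 : R)^'+ => s.
have s0 : 0 < s by near: s; exact: nbhs_right_gt.
have : `|s ^+ 2 * (A - B)| <= e / 2 * s ^+ 2 + e / 2 * s ^+ 2.
  have -> : s ^+ 2 * (A - B) = (D s - s ^+ 2 * B) - (D s - s ^+ 2 * A) by ring.
  apply: (le_trans (ler_normB _ _)); apply: lerD.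
  - by near: s; exact: hB.
  - by near: s; exact: hA.
rewrite -mulrDl -splitr normrM ger0_norm ?sqr_ge0 // mulrC.
by rewrite ler_pM2r // exprn_gt0.
Unshelve. all: by end_near.
Qed.

Definition second_difference f p u w (s : R) :=
  f (p + s *: u + s *: w) - f (p + s *: u) - f (p + s *: w) + f p.

Lemma second_differenceC f p u w s :
  second_difference f p u w s = second_difference f p w u s.
Proof. by rewrite /second_difference [p + s *: w + _]addrAC; ring. Qed.

Lemma norm_segment_le u w {s t : R} : 0 <= t <= s ->
  `|s *: u + t *: w| <= s * (`|u| + `|w|) /\ `|t *: w| <= s * `|w|.
Proof.
move=> /andP[t0 ts]; have tw : `|t *: w| <= s * `|w|.
  by rewrite normrZ ger0_norm // ler_wpM2r.
split=> //; apply: (le_trans (ler_normD _ _)).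
by rewrite normrZ ger0_norm ?(le_trans t0) // mulrDr lerD2l.
Qed.

Lemma second_difference_mvt f g p u w s : 0 < s ->
  (forall z, `|z| <= s * (`|u| + `|w|) -> is_derive (p + z) w f (g (p + z))) ->
  exists2 c, 0 < c < s &
    second_difference f p u w s = s * (g (p + (s *: u + c *: w)) - g (p + c *: w)).
Proof.
move=> s0 hd.
have nu := normr_ge0 u; have nw := normr_ge0 w.
pose h t := f (p + s *: u + t *: w) - f (p + t *: w).
have dh t : 0 <= t <= s -> is_derive t 1 h (g (p + (s *: u + t *: w)) - g (p + t *: w)).
  move=> /(norm_segment_le u w) [h1 h2].
  have d1 : is_derive t 1 (fun t => f (p + s *: u + t *: w)) (g (p + (s *: u + t *: w))).
    by apply/is_derive_lineP; rewrite -addrA; apply: hd.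
  have d2 : is_derive t 1 (fun t => f (p + t *: w)) (g (p + t *: w)).
    by apply/is_derive_lineP; apply: hd; apply: (le_trans h2); rewrite ler_pM2l // lerDr.
  exact: is_deriveB d1 d2.
have [c] : exists2 c, c \in `]0, s[ &
    h s - h 0 = (g (p + (s *: u + c *: w)) - g (p + c *: w)) * (s - 0).
  apply: MVT => // [t|].
    by rewrite in_itv /= => /andP[t0 ts]; apply: dh; rewrite !ltW.
  apply: derivable_within_continuous => t; rewrite in_itv /= => ht.
  by have [] := dh t ht.
rewrite in_itv /= subr0 => cs hc; exists c => //; rewrite mulrC -hc /h.
by rewrite /second_difference !scale0r !addr0; ring.
Qed.

Lemma mean_value_term_le g p u w (s c eps : R) : 0 < s -> 0 <= c <= s -> 0 <= eps ->
  (forall z, `|z| <= s * (`|u| + `|w|) -> `|g (p + z) - g p - 'd g p z| <= eps * `|z|) ->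
  `|s * (g (p + (s *: u + c *: w)) - g (p + c *: w)) - s ^+ 2 * 'd g p u|
    <= eps * (`|u| + 2 * `|w|) * s ^+ 2.
Proof.
move=> s0 cs eps0 hlin; have nu := normr_ge0 u.
have [bu bw] := norm_segment_le u w cs.
have ha := hlin _ bu.
have cw : `|c *: w| <= s * (`|u| + `|w|) by apply: (le_trans bw); rewrite ler_pM2l // lerDr.
have hb := hlin _ cw.
rewrite linearD !linearZ /= in ha; rewrite linearZ /= in hb.
set Du := 'd g p u; set Dw := 'd g p w.
set X := g (p + (s *: u + c *: w)) - g p - (s * Du + c * Dw) in ha.
set Y := g (p + c *: w) - g p - c * Dw in hb.
have -> : s * (g (p + (s *: u + c *: w)) - g (p + c *: w)) - s ^+ 2 * Du = s * (X - Y).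
  by rewrite /X /Y; ring.
have -> : eps * (`|u| + 2 * `|w|) * s ^+ 2 = s * (eps * (s * (`|u| + 2 * `|w|))).
  by ring.
rewrite normrM gtr0_norm // ler_pM2l //.
apply: (le_trans (ler_normB _ _)); apply: (le_trans (lerD ha hb)).
by rewrite -mulrDr ler_wpM2l //; lra.
Qed.

Lemma second_difference_expansion f g p u w :
  (\forall y \near p, is_derive y w f (g y)) -> differentiable g p ->
  forall e, 0 < e -> \forall s \near 0^'+,
    `|second_difference f p u w s - s ^+ 2 * 'd g p u| <= e * s ^+ 2.
Proof.
move=> /nbhs0P hd dg e e0.
have nu := normr_ge0 u; have nw := normr_ge0 w.
pose K := `|u| + 2 * `|w| + 1.
have K0 : 0 < K by rewrite /K; lra.
have eK : 0 < e / K by rewrite divr_gt0.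
have /nbhs_norm0P [r r0 hr] : \forall z \near 0, is_derive (p + z) w f (g (p + z)) /\
    `|((g \o shift p) - (cst (g p) + 'd g p)) z| <= e / K * `|z|.
  by apply/near_andP; split=> //; move/eqaddoP: (diff_locally dg); exact.
near=> s.
have s0 : 0 < s by near: s; exact: nbhs_right_gt.
have sr : s * (`|u| + `|w|) < r.
  suff : s * (`|u| + `|w| + 1) < r by nra.
  rewrite -ltr_pdivlMr; last by lra.
  by near: s; apply: nbhs_right_lt; rewrite divr_gt0 //; lra.
have near_p (z : V) : `|z| <= s * (`|u| + `|w|) -> `|z| < r.
  by move/le_lt_trans; apply.
have [c /andP[c0 cs] ->] :=
  second_difference_mvt f g p u w s s0 (fun z zs => (hr z (near_p z zs)).1).
apply: (le_trans (mean_value_term_le g p u w s c (e / K) s0 _ (ltW eK) _)).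
- by rewrite !ltW.
- move=> z zs; have [_] := hr z (near_p z zs).
  by rewrite !fctE /= [z + p]addrC opprD addrA.
rewrite ler_pM2r ?exprn_gt0 //.
rewrite [leRHS](_ : e = e / K * K); last by rewrite divfK // gt_eqF.
by rewrite ler_pM2l // /K lerDl.
Unshelve. all: by end_near.
Qed.

Theorem derive_symmetric f gu gw p u w :
  (\forall y \near p, is_derive y u f (gu y)) ->
  (\forall y \near p, is_derive y w f (gw y)) ->
  differentiable gu p -> differentiable gw p -> 'D_u gw p = 'D_w gu p.
Proof.
move=> hu hw du dw; rewrite !deriveE //.
apply: (@sq_coef_unique (second_difference f p u w)) => e e0.
  exact: second_difference_expansion.
have := @second_difference_expansion f gu p w u hu du e e0.
by apply: filterS => s; rewrite second_differenceC.
Qed.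

End Schwarz.

Section DiscreteLagrangian.
Context {R : realType} {n : nat} (L : 'rV[R]_n * 'rV[R]_n -> R).
Hypothesis hL : smooth L.

Lemma differentiable_L x : differentiable L x.
Proof. exact: hL [::] x I. Qed.

Lemma D1LE q v w : D1L L q v w = 'd L (q, v) (w, 0).
Proof. by rewrite /D1L deriveE //; exact: differentiable_L. Qed.

Lemma D2LE q v w : D2L L q v w = 'd L (q, v) (0, w).
Proof. by rewrite /D2L deriveE //; exact: differentiable_L. Qed.

Lemma D1L0 q v : D1L L q v 0 = 0.
Proof. exact: derive0. Qed.

Lemma D2L0 q v : D2L L q v 0 = 0.
Proof. exact: derive0. Qed.

Lemma D1LD q v a c : D1L L q v (a + c) = D1L L q v a + D1L L q v c.
Proof. by rewrite !D1LE -linearD; congr (_ (_, _)); rewrite addr0. Qed.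

Lemma D2LD q v a c : D2L L q v (a + c) = D2L L q v a + D2L L q v c.
Proof. by rewrite !D2LE -linearD; congr (_ (_, _)); rewrite addr0. Qed.

Lemma D2LB q v a c : D2L L q v (a - c) = D2L L q v a - D2L L q v c.
Proof. by rewrite !D2LE -linearB; congr (_ (_, _)); rewrite subr0. Qed.

Lemma D2LZ q v k a : D2L L q v (k *: a) = k * D2L L q v a.
Proof.
by rewrite !D2LE -[k * _]/(k *: _) -linearZ; congr (_ (_, _)); rewrite scaler0.
Qed.

Definition Ld (z : st R n) : R := (z.2.2 - z.1.2) * L (z.1.1, vel z.1 z.2).

Definition dLd (b z : st R n) : R :=
  (b.2.2 - b.1.2) * ener L z.1 z.2
  + (z.2.2 - z.1.2) * D1L L z.1.1 (vel z.1 z.2) b.1.1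
  + D2L L z.1.1 (vel z.1 z.2) (b.2.1 - b.1.1).

(* Along the line z + t b the velocity is (k t)^-1 Dq + (t / k t) dDq with constant
   vectors Dq, dDq, so only derivatives of scalar functions of t are needed. *)
Lemma is_derive_Ld (z b : st R n) : z.2.2 != z.1.2 -> is_derive z b Ld (dLd b z).
Proof.
move=> hz; suff : is_derive (0 : R) 1 (fun t : R => Ld (z + t *: b)) (dLd b z).
  by move/is_derive_lineP; rewrite scale0r addr0.
set h := z.2.2 - z.1.2; set dh := b.2.2 - b.1.2.
set Dq := z.2.1 - z.1.1; set dDq := b.2.1 - b.1.1.
have h0 : h != 0 by rewrite subr_eq0.
pose k t : R := h + t *: dh.
pose g t := (z.1.1 + t *: b.1.1, (k t)^-1 *: Dq + (t * (k t)^-1) *: dDq).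
have -> : (fun t => Ld (z + t *: b)) = (fun t => k t * L (g t)).
  apply/funext => t; rewrite /Ld /vel /g /k /=.
  have -> : z.2.2 + t *: b.2.2 - (z.1.2 + t *: b.1.2) = h + t *: dh.
    by rewrite /h /dh !scalerBr; ring.
  congr (_ * L (_, _)); rewrite [t * _]mulrC -scalerA -scalerDr /Dq /dDq.
  by congr (_ *: _); rewrite scalerBr opprD addrACA addrC.
have k0 : k 0 = h by rewrite /k scale0r addr0.
have dk : is_derive (0 : R) 1 k dh := is_derive_line h dh 0.
have dki : is_derive (0 : R) 1 (fun t => (k t)^-1) (- h ^- 2 *: dh).
  by rewrite -k0; apply: is_deriveV; rewrite // k0.
have dtki : is_derive (0 : R) 1 (fun t => t * (k t)^-1) h^-1.
  have := is_deriveM (is_derive_id (0 : R) 1) dki.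
  by rewrite /= k0 scale0r add0r [_ *: 1]mulr1.
have dg := is_derive_pair (is_derive_line z.1.1 b.1.1 0)
  (is_deriveD (is_deriveZl Dq dki) (is_deriveZl dDq dtki)).
have := is_deriveM dk (is_derive_comp L dg (differentiable_L (g 0))).
set dv := (X in (b.1.1, X)).
have -> : k 0 *: 'd L (g 0) (b.1.1, dv) + L (g 0) *: dh = dLd b z.
  have -> : g 0 = (z.1.1, h^-1 *: Dq) by rewrite /g /= k0 mul0r !scale0r !addr0.
  rewrite [(b.1.1, dv)]pair_split /=.
  rewrite linearD -D1LE -D2LE /dv D2LD !D2LZ k0 /dLd /ener /vel -/h -/dh -/Dq -/dDq.
  have scaleRE (a c : R) : a *: c = a * c by [].
  by rewrite D2LZ !scaleRE; field.
exact.
Qed.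

Lemma dLdD (b c z : st R n) : dLd (b + c) z = dLd b z + dLd c z.
Proof.
rewrite /dLd -[(b + c).2.1 - _]/(b.2.1 + c.2.1 - (b.1.1 + c.1.1)).
rewrite (opprD b.1.1) (addrACA b.2.1) (D2LD _ _ (b.2.1 - b.1.1)).
rewrite -[(b + c).1.1]/(b.1.1 + c.1.1) D1LD.
rewrite -[(b + c).2.2]/(b.2.2 + c.2.2) -[(b + c).1.2]/(b.1.2 + c.1.2); ring.
Qed.

Lemma thetaL_dLd (z w : st R n) : thetaL L z w = dLd (0, w.2) z.
Proof. by rewrite /thetaL /dLd /= D1L0 !subr0 mulr0 addr0 mulrC. Qed.

Lemma scheme_dLd (y Gy : st R n) (c : pt R n) :
  Gy.1 = y.2 -> scheme L y.1 y.2 Gy.2 -> dLd (0, c) y + dLd (c, 0) Gy = 0.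
Proof.
move=> hG [he hw]; rewrite /dLd /= hG he D1L0 !D2LB !D2L0.
by have := hw c.1; lra.
Qed.

Section Differentiability.
Context {T : normedModType R}.
Variables (phi : T -> 'rV[R]_n * 'rV[R]_n) (z : T).
Hypothesis dphi : differentiable phi z.

Lemma differentiable_D1L w : differentiable (fun y => D1L L (phi y).1 (phi y).2 w) z.
Proof.
have -> : (fun y => D1L L (phi y).1 (phi y).2 w) = iderive [:: (w, 0)] L \o phi.
  by apply/funext => y /=; case: (phi y).
exact/differentiable_comp/(hL _ _ I).
Qed.

Lemma D2L_sum q v (w : 'rV[R]_n) : D2L L q v w = \sum_(i < n) w 0 i * D2L L q v 'e_i.
Proof.
rewrite {1}(row_sum_delta w) (big_morph _ (D2LD q v) (D2L0 q v)).
by apply: eq_bigr => i _; rewrite D2LZ.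
Qed.

(* Smoothness of L only controls D2L in a fixed direction, hence the expansion of a
   varying direction in the basis 'e_i. *)
Lemma differentiable_D2L (chi : T -> 'rV[R]_n) : differentiable chi z ->
  differentiable (fun y => D2L L (phi y).1 (phi y).2 (chi y)) z.
Proof.
move=> dchi; have -> : (fun y => D2L L (phi y).1 (phi y).2 (chi y)) =
    \sum_(i < n) (fun y => chi y 0 i * D2L L (phi y).1 (phi y).2 'e_i).
  by rewrite fct_sumE; apply/funext => y; rewrite D2L_sum.
apply: differentiable_sum => i; apply: differentiableM.
  exact: differentiable_comp dchi (differentiable_coord _ _ _).
have -> : (fun y => D2L L (phi y).1 (phi y).2 'e_i) = iderive [:: (0, 'e_i)] L \o phi.
  by apply/funext => y /=; case: (phi y).
exact/differentiable_comp/(hL _ _ I).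
Qed.

End Differentiability.

Arguments differentiable_D1L {T phi z}.
Arguments differentiable_D2L {T phi z} dphi {chi}.

Lemma differentiable_vel (z : st R n) : z.2.2 != z.1.2 ->
  differentiable (fun y : st R n => vel y.1 y.2) z.
Proof.
have [d11 d12 d21 d22] := differentiable_coords z.
move=> hz; apply: differentiable_scale; last exact: differentiableB.
by apply: differentiableV; [exact: differentiableB | rewrite subr_eq0].
Qed.

Lemma differentiable_dLd (b z : st R n) : z.2.2 != z.1.2 -> differentiable (dLd b) z.
Proof.
have [d11 d12 d21 d22] := differentiable_coords z.
move=> hz; have dv := differentiable_vel z hz.
have dphi : differentiable (fun y : st R n => (y.1.1, vel y.1 y.2)) z.
  exact: differentiable_pair.
apply: differentiableD; first apply: differentiableD.
- apply: differentiableM; first exact: differentiable_cst.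
  apply: differentiableB; first exact: differentiable_comp dphi (differentiable_L _).
  exact (differentiable_D2L dphi dv).
- apply: differentiableM; first exact: differentiableB.
  exact (differentiable_D1L dphi _).
- exact (differentiable_D2L dphi (differentiable_cst _ _)).
Qed.

Lemma near_time_step (z : st R n) : z.2.2 != z.1.2 -> \forall y \near z, y.2.2 != y.1.2.
Proof.
have [_ d12 _ d22] := differentiable_coords z.
move=> hz; have /differentiable_continuous c := differentiableB d22 d12.
have /(cvgr_neq0 _ c) : z.2.2 - z.1.2 != 0 by rewrite subr_eq0.
by apply: filterS => y; rewrite subr_eq0.
Qed.

Lemma derive_dLd_sym (z a b : st R n) : z.2.2 != z.1.2 ->
  'D_a (dLd b) z = 'D_b (dLd a) z.
Proof.
move=> hz; apply: (derive_symmetric Ld (dLd a) (dLd b)); try exact: differentiable_dLd.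
all: by have := near_time_step z hz; apply: filterS => y hy; exact: is_derive_Ld.
Qed.

Lemma derive_dLd_split (z a b : st R n) : z.2.2 != z.1.2 ->
  'D_a (dLd b) z = 'D_a (dLd (b.1, 0)) z + 'D_a (dLd (0, b.2)) z.
Proof.
move=> hz; rewrite -deriveD; try exact/diff_derivable/differentiable_dLd.
congr ('D_a _ z); apply/funext => y.
by rewrite [in LHS](pair_split b) dLdD.
Qed.

Lemma omegaL_dLd (z u w : st R n) :
  omegaL L z u w = 'D_u (dLd (0, w.2)) z - 'D_w (dLd (0, u.2)) z.
Proof.
have thetaE (v : st R n) : (fun y => thetaL L y v) = dLd (0, v.2).
  by apply/funext => y; exact: thetaL_dLd.
by rewrite /omegaL !thetaE.
Qed.

Section FlowMap.
Context {U : set (st R n)} {G : st R n -> st R n}.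
Hypotheses (oU : open U) (sG : smooth_on U G).
Hypothesis G_fst : forall p, U p -> (G p).1 = p.2.
Hypothesis G_scheme : forall p, U p -> scheme L p.1 p.2 (G p).2.
Context {p : st R n}.
Hypothesis Up : U p.

Let dG : differentiable G p := sG [::] p Up.
Let nearU : \forall y \near p, U y := oU p Up.

Lemma derive_flow_fst v : ('D_v G p).1 = v.2.
Proof.
rewrite -(derive_fst (G p)) -derive_comp //; last exact: differentiable_fst.
rewrite (near_eq_derive (g := snd)) ?derive_snd //.
by apply: filterS nearU => y; exact: G_fst.
Qed.

Lemma derive_scheme_dLd (c : pt R n) v :
  p.2.2 != p.1.2 -> (G p).2.2 != (G p).1.2 ->
  'D_v (dLd (0, c)) p + 'D_('D_v G p) (dLd (c, 0)) (G p) = 0.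
Proof.
move=> hp hGp.
have d0c := differentiable_dLd (0, c) p hp.
have dc0 := differentiable_dLd (c, 0) (G p) hGp.
rewrite -derive_comp // -deriveD; last 2 first.
- exact: diff_derivable.
- exact/diff_derivable/differentiable_comp.
rewrite (near_eq_derive (g := cst 0)) ?derive_cst //.
by apply: filterS nearU => y Uy; exact (scheme_dLd y (G y) c (G_fst y Uy) (G_scheme y Uy)).
Qed.

Lemma pullback_omegaL_eq u w : p.2.2 != p.1.2 -> (G p).2.2 != (G p).1.2 ->
  pullback_omegaL L G p u w = omegaL L p u w.
Proof.
have rearrange (s c d x y p1 p2 : R) :
  s = c + x -> s = d + y -> p1 + c = 0 -> p2 + d = 0 -> x - y = p1 - p2 by lra.
move=> hp hGp; rewrite /pullback_omegaL !omegaL_dLd.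
have ha := derive_dLd_split (G p) ('D_u G p) ('D_w G p) hGp.
have hb := derive_dLd_split (G p) ('D_w G p) ('D_u G p) hGp.
rewrite derive_flow_fst in ha; rewrite derive_flow_fst in hb.
exact: rearrange ha (etrans (derive_dLd_sym (G p) _ _ hGp) hb)
  (derive_scheme_dLd w.2 u hp hGp) (derive_scheme_dLd u.2 w hp hGp).
Qed.

End FlowMap.

End DiscreteLagrangian.

Lemma energyE (R : realType) (n : nat) (L : 'rV[R]_n * 'rV[R]_n -> R) (a b : pt R n) :
  energy L a b = - ener L a b.
Proof. by rewrite /energy /ener opprB. Qed.

Lemma energy_conserved (R : realType) (n : nat) (L : 'rV[R]_n * 'rV[R]_n -> R)
    (x : nat -> pt R n) :
  (forall k, scheme L (x k) (x k.+1) (x k.+2)) ->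
  forall k, energy L (x k) (x k.+1) = energy L (x 0%N) (x 1%N).
Proof.
move=> hs; elim=> // k IH.
by rewrite -IH !energyE; have [-> _] := hs k.
Qed.

Theorem mainTheorem5 (R : realType) (n : nat)
    (L : 'rV[R]_n * 'rV[R]_n -> R) (hL : smooth L) :
  (* (i) conservation of energy along any solution *)
  (forall x : nat -> pt R n,
     (forall k, (x k.+1).2 != (x k).2) ->
     (forall k, scheme L (x k) (x k.+1) (x k.+2)) ->
     forall k, energy L (x k) (x k.+1) = - ener L (x k) (x k.+1) /\
               energy L (x k) (x k.+1) = energy L (x 0%N) (x 1%N)) /\
  (* (ii) preservation of the Lagrangian two-form *)
  (forall (U : set (st R n)) (G : st R n -> st R n),
     open U -> smooth_on U G ->
     (forall p, U p -> p.2.2 != p.1.2 /\ (G p).2.2 != (G p).1.2) ->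
     (forall p, U p -> (G p).1 = p.2) ->
     (forall p, U p -> scheme L p.1 p.2 (G p).2) ->
     forall p, U p -> forall u w : st R n,
       pullback_omegaL L G p u w = omegaL L p u w).
Proof.
split=> [x _ hs k | U G oU sG hT G_fst G_scheme p Up u w].
  by split; [exact: energyE | exact: energy_conserved].
have [hp hGp] := hT p Up.
exact (pullback_omegaL_eq L hL oU sG G_fst G_scheme Up u w hp hGp).
Qed.
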